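(* Let $n,m,d,k$ be positive integers with $k\le 2^{m-1}$, and let $N=2^n$ (with $N$ large and $d,k\le\sqrt N$). Consider the following decision problem. For a function $f:\{0,1\}^n\to\{0,1\}^m$, let $F=f^{\otimes d}:\{0,1\}^{dn}\to\{0,1\}^{dm}$ be given by $F(x_1,\dots,x_d)=(f(x_1),\dots,f(x_d))$. The algorithm is given access to $F$ only through the oracle unitary $T_F$ acting on $(dn+dm)$ qubits by $T_F\ket{x}\ket{z}=\ket{x}\ket{z\oplus F(x)}$ for $x\in\{0,1\}^{dn}$, $z\in\{0,1\}^{dm}$. It is also given $k$ distinct items $y_1,\dots,y_k\in\{0,1\}^m$. It is promised that either all of the $y_i$ lie in the image of $f$, or exactly $k-1$ of them do, and it must decide (correctly with probability at least $3/4$) whether all $y_i$ lie in the image of $f$. Then every quantum circuit solving this problem uses \[\Omega\left(\sqrt{\frac{Nk}{d\min\{d,k\}}}\right)\] applications of $T_F$.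
   Context: An item $y\in\{0,1\}^m$ is ''in the database $f$'' if $f(x)=y$ for some $x\in\{0,1\}^n$. Note that $T_F=T_f^{\otimes d}$ up to reordering of qubits, where $T_f\ket{x}\ket{z}=\ket{x}\ket{z\oplus f(x)}$; thus one application of $T_F$ is a parallel query to $d$ copies of the database $f$. The complexity measure is the number of applications of $T_F$; other unitaries (independent of $f$) are free. *)

From mathcomp Require Import all_boot all_order all_algebra.
From mathcomp Require Import complex Rstruct.
Set Implicit Arguments. Unset Strict Implicit. Unset Printing Implicit Defensive.
Import Order.TTheory GRing.Theory Num.Theory.
Local Open Scope ring_scope.

Definition R := Rdefinitions.R.
Definition C := (Rdefinitions.R)[i].

Definition bits (n : nat) := (n.-tuple bool)%type.

Definition xor_bits m (u v : bits m) : bits m := [tuple xorb (tnth u i) (tnth v i) | i < m].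
Definition xor_blocks d m (u v : d.-tuple (bits m)) : d.-tuple (bits m) :=
  [tuple xor_bits (tnth u i) (tnth v i) | i < d].

Definition Fpar d n m (f : bits n -> bits m) (x : d.-tuple (bits n)) : d.-tuple (bits m) :=
  [tuple f (tnth x i) | i < d].

(* computational basis of the whole register: query input x (dn qubits),
   query output z (dm qubits), workspace a (w qubits) *)
Definition basis n m d w := ((d.-tuple (bits n) * d.-tuple (bits m)) * bits w)%type.

(* linear operators on C^basis, given by their matrix entries U b' b *)
Definition op (B : finType) := B -> B -> C.
Definition state (B : finType) := B -> C.

Definition apply (B : finType) (U : op B) (psi : state B) : state B :=
  fun b => \sum_(a : B) U b a * psi a.

Definition unitary (B : finType) (U : op B) : Prop :=
  forall a a' : B, \sum_(b : B) (U b a)^* * U b a' = (a == a')%:R.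

Definition oracle n m d w (f : bits n -> bits m) : op (basis n m d w) :=
  fun b' b => (b' == ((b.1.1, xor_blocks b.1.2 (Fpar f b.1.1)), b.2))%:R.

Definition zero_basis n m d w : basis n m d w :=
  (([tuple [tuple false | _ < n] | _ < d], [tuple [tuple false | _ < m] | _ < d]),
   [tuple false | _ < w]).

Definition init n m d w : state (basis n m d w) :=
  fun b => (b == zero_basis n m d w)%:R.

Fixpoint run n m d w (f : bits n -> bits m) (U : nat -> op (basis n m d w)) (j : nat)
  : state (basis n m d w) :=
  match j with
  | 0 => apply (U 0%N) (@init n m d w)
  | j'.+1 => apply (U j) (apply (@oracle n m d w f) (run f U j'))
  end.

Definition normsq (z : C) : R := (complex.Re z) ^+ 2 + (complex.Im z) ^+ 2.

(* probability of accepting: measure in the computational basis and accept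
   iff the outcome satisfies the (arbitrary) predicate out *)
Definition acc_prob n m d w (f : bits n -> bits m) (U : nat -> op (basis n m d w))
  (t : nat) (out : pred (basis n m d w)) : R :=
  \sum_(b : basis n m d w | out b) normsq (run f U t b).

Definition in_image n m (f : bits n -> bits m) (y : bits m) : bool :=
  [exists x : bits n, f x == y].

From mathcomp Require Import all_boot all_order all_algebra.
From mathcomp Require Import complex Rstruct.
From mathcomp Require Import ring lra zify.
Set Implicit Arguments. Unset Strict Implicit. Unset Printing Implicit Defensive.
Import Order.TTheory GRing.Theory Num.Theory.
Local Open Scope ring_scope.

(* Positive-weight adversary argument.  Call (f, g) a hard pair if f stores
   the k items at k distinct inputs and maps every other input to a value z
   that is not an item, and g is f with one item overwritten by z.  Weighting
   each hard pair by 1, the progress  sum_{f,g} Re <psi_f^j, psi_g^j>  starts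
   at the number S of hard pairs and must end below (31/32) S, because the
   final states of a yes- and a no-instance are told apart with constant
   bias.  A parallel query only moves amplitude on basis states that query an
   input where f and g differ: every f has k partners g, of which a fixed
   query reaches at most min(d, k), and every g has at least N - k + 1
   partners f, of which a query reaches at most d.  By AM-GM one query thus
   costs at most S (lam min(d,k)/k + d/(lam (N-k+1))) for every lam > 0, and
   optimising lam gives t >= sqrt(k (N-k+1) / (d min(d,k))) / 64. *)

Definition dotc (a c : C) : R :=
  complex.Re a * complex.Re c + complex.Im a * complex.Im c.

Lemma Re_conjM (a c : C) : complex.Re (a^* * c) = dotc a c.
Proof. by case: a => a1 a2; case: c => c1 c2; rewrite /dotc /=; ring. Qed.

Lemma Re_sum (I : finType) (F : I -> C) :
  complex.Re (\sum_i F i) = \sum_i complex.Re (F i).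
Proof. by elim/big_rec2: _ => // i x y _ <-; case: (F i); case: y. Qed.

Lemma dotcc (a : C) : dotc a a = normsq a.
Proof. by rewrite /dotc /normsq !expr2. Qed.

Lemma normsq_ge0 (a : C) : 0 <= normsq a.
Proof. by rewrite addr_ge0 ?sqr_ge0. Qed.

Lemma normsqB (a c : C) : normsq (a - c) = normsq a + normsq c - 2 * dotc a c.
Proof. by case: a => a1 a2; case: c => c1 c2; rewrite /normsq /dotc /=; ring. Qed.

Lemma normsqD (a c : C) : normsq (a + c) = normsq a + normsq c + 2 * dotc a c.
Proof. by case: a => a1 a2; case: c => c1 c2; rewrite /normsq /dotc /=; ring. Qed.

Lemma dotc_subr_addr (a c : C) : dotc (a - c) (a + c) = normsq a - normsq c.
Proof. by case: a => a1 a2; case: c => c1 c2; rewrite /normsq /dotc /=; ring. Qed.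

Lemma norm_dotc_le (a c : C) (lam : R) : 0 < lam ->
  `|dotc a c| <= (lam * normsq a + normsq c / lam) / 2.
Proof.
move=> lam_gt0; have lam_neq0 : lam != 0 by rewrite gt_eqF.
rewrite /dotc /normsq; case: a => a1 a2; case: c => c1 c2 /=.
have sq_ge0 (s : R) : 0 <= ((lam * a1 + s * c1) ^+ 2 + (lam * a2 + s * c2) ^+ 2) / lam.
  by rewrite divr_ge0 ?addr_ge0 ?sqr_ge0 ?ltW.
have [sq_add_ge0 sq_sub_ge0] := (sq_ge0 1, sq_ge0 (-1)).
have sq_addE : ((lam * a1 + 1 * c1) ^+ 2 + (lam * a2 + 1 * c2) ^+ 2) / lam
  = lam * (a1 ^+ 2 + a2 ^+ 2) + (c1 ^+ 2 + c2 ^+ 2) / lam + 2 * (a1 * c1 + a2 * c2).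
  by field.
have sq_subE : ((lam * a1 + -1 * c1) ^+ 2 + (lam * a2 + -1 * c2) ^+ 2) / lam
  = lam * (a1 ^+ 2 + a2 ^+ 2) + (c1 ^+ 2 + c2 ^+ 2) / lam - 2 * (a1 * c1 + a2 * c2).
  by field.
rewrite ler_norml; apply/andP; split; lra.
Qed.

Lemma sumr_delta (I : finType) (S : pzSemiRingType) (F : I -> S) (i : I) :
  \sum_j F j * (i == j)%:R = F i.
Proof.
rewrite (bigD1 i) //= eqxx mulr1 big1 ?addr0 // => j.
by rewrite eq_sym => /negbTE ->; rewrite mulr0.
Qed.

Lemma sumr_bool_card (I : finType) (S : pzSemiRingType) (P : pred I) :
  \sum_i ((P i)%:R : S) = #|[set i | P i]|%:R.
Proof.
rewrite cardsE -sum1_card natr_sum [RHS]big_mkcond /=; apply: eq_bigr => i _.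
by rewrite unfold_in; case: (P i).
Qed.

Lemma exists_inj_ffun (T : finType) k : (k <= #|T|)%N ->
  exists p : {ffun 'I_k -> T}, injective p.
Proof.
move=> k_le; exists [ffun i => enum_val (widen_ord k_le i)] => i j; rewrite !ffunE.
by move/enum_val_inj/(congr1 val) => /= eq_ij; apply: val_inj.
Qed.

Section States.
Variable B : finType.

Definition inner (u v : state B) : C := \sum_b (u b)^* * v b.

Definition dot (u v : state B) : R := \sum_b dotc (u b) (v b).

Lemma dotE (u v : state B) : dot u v = complex.Re (inner u v).
Proof. by rewrite /inner Re_sum; apply: eq_bigr => b _; rewrite Re_conjM. Qed.

Lemma dot_normsq (u : state B) : dot u u = \sum_b normsq (u b).
Proof. by apply: eq_bigr => b _; rewrite dotcc. Qed.

Lemma sum_normsqB (u v : state B) :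
  \sum_b normsq (u b - v b) = dot u u + dot v v - 2 * dot u v.
Proof.
rewrite !dot_normsq /dot mulr_sumr -big_split -sumrB /=.
by apply: eq_bigr => b _; rewrite normsqB.
Qed.

Lemma sum_normsqD (u v : state B) :
  \sum_b normsq (u b + v b) = dot u u + dot v v + 2 * dot u v.
Proof.
rewrite !dot_normsq /dot mulr_sumr -!big_split /=.
by apply: eq_bigr => b _; rewrite normsqD.
Qed.

Lemma inner_unitary (U : op B) (u v : state B) : unitary U ->
  inner (apply U u) (apply U v) = inner u v.
Proof.
move=> U_unitary; rewrite /inner /apply.
transitivity (\sum_b \sum_a \sum_a' (u a)^* * v a' * ((U b a)^* * U b a')).
  apply: eq_bigr => b _; rewrite rmorph_sum mulr_suml; apply: eq_bigr => a _.
  by rewrite mulr_sumr; apply: eq_bigr => a' _; rewrite rmorphM; ring.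
rewrite exchange_big; apply: eq_bigr => a _ /=; rewrite exchange_big /=.
under eq_bigr do rewrite -mulr_sumr U_unitary.
exact: sumr_delta.
Qed.

Lemma dot_unitary (U : op B) (u v : state B) : unitary U ->
  dot (apply U u) (apply U v) = dot u v.
Proof. by move=> U_unitary; rewrite !dotE inner_unitary. Qed.

Definition permop (s : B -> B) : op B := fun b' b => (b' == s b)%:R.

Lemma apply_permop (s : B -> B) (u : state B) (b : B) : involutive s ->
  apply (permop s) u b = u (s b).
Proof.
move=> sK; rewrite /apply (reindex_inj (inv_inj sK)) /=.
under eq_bigr do rewrite /permop sK mulrC.
exact: sumr_delta.
Qed.

Lemma unitary_permop (s : B -> B) : injective s -> unitary (permop s).
Proof.
move=> s_inj a a'; rewrite /permop.
under eq_bigr do rewrite rmorph_nat eq_sym mulrC.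
by rewrite sumr_delta (inj_eq s_inj).
Qed.

Lemma dot_le_of_acc_gap (u v : state B) (out : pred B) :
  dot u u = 1 -> dot v v = 1 ->
  3 / 4 <= \sum_(b | out b) normsq (u b) ->
  \sum_(b | out b) normsq (v b) <= 1 / 4 ->
  dot u v <= 1 - 1 / 32.
Proof.
move=> u_unit v_unit u_acc v_acc.
(* [|a|^2 - |c|^2 = Re((a - c)^* (a + c))], bounded by AM-GM with weight 8. *)
pose h b := 4 * normsq (u b - v b) + normsq (u b + v b) / 16.
have gap_le_h b : normsq (u b) - normsq (v b) <= h b.
  rewrite -dotc_subr_addr; apply: le_trans (ler_norm _) _.
  apply: le_trans (norm_dotc_le _ _ (_ : 0 < 8)) _ => //.
  by rewrite /h; lra.
have h_ge0 b : 0 <= h b.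
  by have := normsq_ge0 (u b - v b); have := normsq_ge0 (u b + v b); rewrite /h; lra.
have sum_h : \sum_b h b = 4 * (2 - 2 * dot u v) + (2 + 2 * dot u v) / 16.
  by rewrite /h big_split /= -mulr_sumr -mulr_suml sum_normsqB sum_normsqD u_unit v_unit.
have : 1 / 2 <= \sum_b h b.
  apply: le_trans (_ : \sum_(b | out b) h b <= _); last first.
    by rewrite [leRHS](bigID out) /= lerDl sumr_ge0.
  apply: le_trans (ler_sum _ (fun b _ => gap_le_h b)); rewrite sumrB; lra.
rewrite sum_h; lra.
Qed.

End States.

Lemma xor_bitsK m (u v : bits m) : xor_bits (xor_bits u v) v = u.
Proof.
apply: eq_from_tnth => i; rewrite !tnth_mktuple.
by case: (tnth u i); case: (tnth v i).
Qed.

Lemma xor_blocksK d m (u v : d.-tuple (bits m)) : xor_blocks (xor_blocks u v) v = u.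
Proof. by apply: eq_from_tnth => i; rewrite !tnth_mktuple xor_bitsK. Qed.

Section Oracle.
Variables n m d w : nat.
Local Notation B := (basis n m d w).

Definition query (f : bits n -> bits m) (b : B) : B :=
  ((b.1.1, xor_blocks b.1.2 (Fpar f b.1.1)), b.2).

Lemma queryK f : involutive (query f).
Proof. by case=> [[x z] a]; rewrite /query /= xor_blocksK. Qed.

Lemma oracleE f : @oracle n m d w f = permop (query f).
Proof. by []. Qed.

Lemma apply_oracle f (u : state B) b : apply (oracle f) u b = u (query f b).
Proof. by rewrite oracleE apply_permop //; apply: queryK. Qed.

Lemma unitary_oracle f : unitary (@oracle n m d w f).
Proof. by rewrite oracleE; apply/unitary_permop/inv_inj/queryK. Qed.

Definition query_differs (f g : bits n -> bits m) (b : B) : bool :=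
  Fpar f b.1.1 != Fpar g b.1.1.

Lemma query_differsC f g b : query_differs f g b = query_differs g f b.
Proof. by rewrite /query_differs eq_sym. Qed.

Lemma dot_oracle_ge f g (u v : state B) (lam : R) : 0 < lam ->
  dot u v - (lam * \sum_(b | query_differs f g b) normsq (u b)
             + (\sum_(b | query_differs f g b) normsq (v b)) / lam)
  <= dot (apply (oracle f) u) (apply (oracle g) v).
Proof.
move=> lam_gt0; set D := query_differs f g; have lam_neq0 : lam != 0 by rewrite gt_eqF.
pose pi b := query g (query f b).
have pi_id b : ~~ D b -> pi b = b.
  case: b => [[x z] a]; rewrite /D /query_differs /pi /query /= negbK => /eqP ->.
  by rewrite xor_blocksK.
have pi_inj : injective pi by move=> b1 b2 /(inv_inj (queryK g)) /(inv_inj (queryK f)).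
have D_pi b : D (pi b) = D b by case: b => [[x z] a].
have -> : dot (apply (oracle f) u) (apply (oracle g) v) = \sum_b dotc (u b) (v (pi b)).
  rewrite /dot (reindex_inj (inv_inj (queryK f))) /=.
  by apply: eq_bigr => b _; rewrite !apply_oracle queryK.
have sum_v_pi : \sum_(b | D b) normsq (v (pi b)) = \sum_(b | D b) normsq (v b).
  by rewrite [RHS](reindex_inj pi_inj); apply: eq_bigl => b; rewrite D_pi.
have dotc_pi_ge b : dotc (u b) (v b) - dotc (u b) (v (pi b))
    <= lam * normsq (u b) + (normsq (v b) + normsq (v (pi b))) / (2 * lam).
  have := norm_dotc_le (u b) (v b) lam_gt0; have := norm_dotc_le (u b) (v (pi b)) lam_gt0.
  rewrite !ler_norml => /andP [lower_pi _] /andP [_ upper].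
  have -> : (normsq (v b) + normsq (v (pi b))) / (2 * lam) =
    normsq (v b) / lam / 2 + normsq (v (pi b)) / lam / 2 by field.
  lra.
rewrite /dot [X in X - _](bigID D) [X in _ <= X](bigID D) /=.
rewrite [X in _ <= _ + X](eq_bigr (fun b => dotc (u b) (v b))); last by move=> b /pi_id ->.
rewrite addrAC lerD2r lerBlDr -lerBlDl -sumrB.
apply: le_trans (ler_sum _ (fun b _ => dotc_pi_ge b)) _.
rewrite big_split /= -mulr_sumr -mulr_suml [X in X / _]big_split /= sum_v_pi.
rewrite lerD2l; set s := \sum_(b | D b) normsq (v b).
suff -> : (s + s) / (2 * lam) = s / lam by [].
by field.
Qed.

Lemma run_unit_norm f (U : nat -> op B) t :
  (forall i, (i <= t)%N -> unitary (U i)) ->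
  forall j, (j <= t)%N -> dot (run f U j) (run f U j) = 1.
Proof.
move=> U_unitary; elim=> [|j IH] j_le /=.
  rewrite dot_unitary; last exact: U_unitary.
  rewrite dot_normsq (bigD1 (zero_basis n m d w)) //= big1 ?addr0.
    by rewrite /init eqxx /normsq /= expr1n expr0n addr0.
  by move=> b /negbTE; rewrite /init => ->; rewrite /normsq /= expr0n addr0.
rewrite dot_unitary; last exact: U_unitary.
by rewrite dot_unitary ?IH ?(ltnW j_le) //; apply: unitary_oracle.
Qed.

End Oracle.

Lemma weighted_mass_le (F : numDomainType) (G B : finType) (wt : G -> F)
    (D : G -> pred B) (p : B -> F) (alpha : F) :
  (forall b, 0 <= p b) -> \sum_b p b = 1 ->
  (forall b, \sum_g wt g * (D g b)%:R <= alpha * \sum_g wt g) ->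
  \sum_g wt g * \sum_(b | D g b) p b <= alpha * \sum_g wt g.
Proof.
move=> p_ge0 p_sum1 wt_le.
have -> : \sum_g wt g * \sum_(b | D g b) p b = \sum_b p b * \sum_g wt g * (D g b)%:R.
  under eq_bigr do rewrite big_mkcond mulr_sumr.
  rewrite exchange_big; apply: eq_bigr => b _; rewrite mulr_sumr.
  by apply: eq_bigr => g _; case: (D g b); rewrite ?mulr1 ?mulr0 ?mul0r // mulrC.
apply: le_trans (_ : \sum_b p b * (alpha * \sum_g wt g) <= _).
  by apply: ler_sum => b _; rewrite ler_wpM2l.
by rewrite -mulr_suml p_sum1 mul1r.
Qed.

Section Adversary.
Variables (n m d w t : nat) (U : nat -> op (basis n m d w)).
Hypothesis U_unitary : forall i, (i <= t)%N -> unitary (U i).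
Local Notation T := {ffun bits n -> bits m}.
Variables (W : T -> T -> R) (alpha beta : R).
Hypothesis W_ge0 : forall f g, 0 <= W f g.
Hypothesis W_alpha : forall f (b : basis n m d w),
  \sum_g W f g * (query_differs f g b)%:R <= alpha * \sum_g W f g.
Hypothesis W_beta : forall g (b : basis n m d w),
  \sum_f W f g * (query_differs f g b)%:R <= beta * \sum_f W f g.

Let total := \sum_f \sum_g W f g.

Definition progress j := \sum_f \sum_g W f g * dot (run f U j) (run g U j).

Lemma progress0 : progress 0 = total.
Proof.
apply: eq_bigr => f _; apply: eq_bigr => g _.
by rewrite [run g U 0]/= -[apply _ _]/(run f U 0) (run_unit_norm f U_unitary (leq0n t)) mulr1.
Qed.

Lemma mass_differs_l j : (j <= t)%N ->
  \sum_f \sum_g W f g * \sum_(b | query_differs f g b) normsq (run f U j b)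
  <= alpha * total.
Proof.
move=> j_le; rewrite /total mulr_sumr; apply: ler_sum => f _.
apply: (@weighted_mass_le _ _ _ (W f) (fun g : T => query_differs f g)) => //.
  by move=> b; apply: normsq_ge0.
by rewrite -dot_normsq (run_unit_norm f U_unitary j_le).
Qed.

Lemma mass_differs_r j : (j <= t)%N ->
  \sum_f \sum_g W f g * \sum_(b | query_differs f g b) normsq (run g U j b)
  <= beta * total.
Proof.
move=> j_le; rewrite /total exchange_big [X in _ <= _ * X]exchange_big mulr_sumr.
apply: ler_sum => g _.
apply: (@weighted_mass_le _ _ _ (W^~ g) (fun f : T => query_differs f g)) => //.
  by move=> b; apply: normsq_ge0.
by rewrite -dot_normsq (run_unit_norm g U_unitary j_le).
Qed.

Lemma progress_step j (lam : R) : (j < t)%N -> 0 < lam ->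
  progress j - total * (lam * alpha + beta / lam) <= progress j.+1.
Proof.
move=> j_lt lam_gt0.
pose psi f := run f U j.
pose P f g := \sum_(b | query_differs f g b) normsq (psi f b).
pose Q f g := \sum_(b | query_differs f g b) normsq (psi g b).
have step_fg f g : W f g * (dot (psi f) (psi g) - (lam * P f g + Q f g / lam))
    <= W f g * dot (run f U j.+1) (run g U j.+1).
  rewrite [run f U j.+1]/= [run g U j.+1]/= dot_unitary; last exact: U_unitary.
  by rewrite ler_wpM2l //; apply: dot_oracle_ge.
have sum_step : \sum_f \sum_g W f g * (dot (psi f) (psi g) - (lam * P f g + Q f g / lam))
    = progress j - (lam * \sum_f \sum_g W f g * P f g + (\sum_f \sum_g W f g * Q f g) / lam).
  rewrite /progress mulr_sumr mulr_suml -big_split -sumrB /=; apply: eq_bigr => f _.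
  rewrite mulr_sumr mulr_suml -big_split -sumrB /=; apply: eq_bigr => g _.
  by ring.
apply: le_trans (ler_sum _ (fun f _ => ler_sum _ (fun g _ => step_fg f g))).
rewrite sum_step lerD2l lerN2.
have P_le := ler_wpM2l (ltW lam_gt0) (mass_differs_l (ltnW j_lt)).
have lamV_ge0 : 0 <= lam^-1 by rewrite invr_ge0 ltW.
have Q_le := ler_wpM2r lamV_ge0 (mass_differs_r (ltnW j_lt)).
have -> : total * (lam * alpha + beta / lam) = lam * (alpha * total) + beta * total / lam.
  by ring.
lra.
Qed.

Lemma progress_ge j (lam : R) : (j <= t)%N -> 0 < lam ->
  total - j%:R * (total * (lam * alpha + beta / lam)) <= progress j.
Proof.
move=> + lam_gt0; elim: j => [|j IH] j_le; first by rewrite progress0 mul0r subr0.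
apply: le_trans (progress_step j_le lam_gt0).
by rewrite -natr1 mulrDl mul1r opprD addrA lerD2r IH // ltnW.
Qed.

Lemma progress_le (eps : R) :
  (forall f g, 0 < W f g -> dot (run f U t) (run g U t) <= 1 - eps) ->
  progress t <= total * (1 - eps).
Proof.
move=> W_sep; rewrite /total mulr_suml; apply: ler_sum => f _.
rewrite mulr_suml; apply: ler_sum => g _.
have := W_ge0 f g; rewrite le0r => /orP [/eqP ->|W_gt0]; first by rewrite !mul0r.
by rewrite ler_wpM2l ?W_sep ?ltW.
Qed.

Lemma adversary_bound (eps lam : R) : 0 < lam -> 0 < total ->
  (forall f g, 0 < W f g -> dot (run f U t) (run g U t) <= 1 - eps) ->
  eps <= t%:R * (lam * alpha + beta / lam).
Proof.
move=> lam_gt0 total_gt0 W_sep.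
have := le_trans (progress_ge (leqnn t) lam_gt0) (progress_le W_sep).
set s := t%:R * (total * _) => progress_bounds.
by rewrite -(ler_pM2l total_gt0) mulrCA -/s; lra.
Qed.

End Adversary.

Definition fupdate (aT : finType) (rT : Type) (h : {ffun aT -> rT}) (x0 : aT) (v : rT) :
  {ffun aT -> rT} := [ffun x => if x == x0 then v else h x].

Lemma fupdate_inj (aT rT : finType) (p : {ffun aT -> rT}) (j : aT) (x : rT) :
  injective p -> (forall i, i != j -> p i != x) -> injective (fupdate p j x).
Proof.
move=> p_inj p_x i1 i2; rewrite !ffunE.
case: (eqVneq i1 j) => [->|i1j]; case: (eqVneq i2 j) => [->|i2j] //.
- by move=> E; have := p_x i2 i2j; rewrite -E eqxx.
- by move=> E; have := p_x i1 i1j; rewrite E eqxx.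
- exact: p_inj.
Qed.

Section QueryUpdate.
Variables n m d w : nat.
Local Notation T := {ffun bits n -> bits m}.

Lemma query_differs_fupdate (h : T) x0 v (b : basis n m d w) :
  query_differs h (fupdate h x0 v) b -> exists l, tnth b.1.1 l = x0.
Proof.
move=> differs; suff /existsP [l /eqP <-] : [exists l, tnth b.1.1 l == x0] by exists l.
apply: contraLR differs => /existsPn not_queried; rewrite negbK.
apply/eqP/eq_from_tnth => l; rewrite !tnth_mktuple ffunE.
by have := not_queried l; case: eqP.
Qed.

Lemma card_query_differs_fupdate (h : T) v (A : pred T) (b : basis n m d w) :
  (forall h', A h' -> exists x, h' = fupdate h x v) ->
  (#|[set h' | A h' && query_differs h h' b]| <= d)%N.
Proof.
move=> A_upd.
apply: leq_trans (_ : #|[set fupdate h (tnth b.1.1 l) v | l : 'I_d]| <= d)%N; last first.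
  by rewrite (leq_trans (leq_imset_card _ _)) ?card_ord.
apply/subset_leq_card/subsetP => h'; rewrite inE => /andP [/A_upd [x ->] differs].
have [l <-] := query_differs_fupdate differs.
by apply/imsetP; exists l.
Qed.

End QueryUpdate.

Section Planted.
Variables (n m k : nat) (ys : {ffun 'I_k -> bits m}) (z : bits m).
Hypothesis ys_inj : injective ys.
Hypothesis ys_neq_z : forall i, ys i != z.
Local Notation T := {ffun bits n -> bits m}.
Local Notation P := {ffun 'I_k -> bits n}.

(* [planted p None] stores item [ys i] at position [p i] and [z] everywhere
   else; [planted p (Some j)] additionally erases item [j]. *)
Definition planted (p : P) (o : option 'I_k) : T :=
  [ffun x => if [pick i | (p i == x) && (Some i != o)] is Some i then ys i else z].

Lemma planted_pos (p : P) o i : injective p ->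
  planted p o (p i) = if Some i != o then ys i else z.
Proof.
move=> p_inj; rewrite ffunE; case: pickP => [i' /andP [/eqP /p_inj -> ->] //|none].
by have := none i; rewrite eqxx /= => ->.
Qed.

Lemma planted_out (p : P) o x : (forall i, p i != x) -> planted p o x = z.
Proof.
move=> x_out; rewrite ffunE; case: pickP => [i /andP [px _]|//].
by have := x_out i; rewrite px.
Qed.

Lemma plantedP (p : P) o x : injective p ->
  (exists2 i, x = p i & planted p o x = if Some i != o then ys i else z)
  \/ planted p o x = z /\ (forall i, p i != x).
Proof.
move=> p_inj; case: (pickP (fun i => p i == x)) => [i /eqP <-|none].
  by left; exists i; rewrite ?planted_pos.
by right; split; [apply: planted_out|] => i; rewrite none.
Qed.

Lemma in_image_planted (p : P) o i : injective p ->
  in_image (planted p o) (ys i) = (Some i != o).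
Proof.
move=> p_inj; apply/existsP/idP => [[x /eqP]|present]; last first.
  by exists (p i); rewrite planted_pos // present.
have neq_z := ys_neq_z i.
case: (plantedP o x p_inj) => [[i' -> ->]|[-> _]]; last first.
  by move=> z_eq; rewrite z_eq eqxx in neq_z.
by case: ifP => [present /ys_inj <- //|_ z_eq]; rewrite z_eq eqxx in neq_z.
Qed.

Lemma planted_Some (p : P) j : injective p ->
  planted p (Some j) = fupdate (planted p None) (p j) z.
Proof.
move=> p_inj; apply/ffunP => x; rewrite [RHS]ffunE.
case: eqP => [->|x_neq]; first by rewrite planted_pos // eqxx.
case: (plantedP (Some j) x p_inj) => [[i x_eq ->]|[-> x_out]].
  rewrite x_eq planted_pos //=; case: eqP => [[ij]|//].
  by case: x_neq; rewrite x_eq ij.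
by rewrite (planted_out _ x_out).
Qed.

Lemma planted_None (p : P) j : injective p ->
  planted p None = fupdate (planted p (Some j)) (p j) (ys j).
Proof.
move=> p_inj; apply/ffunP => x; rewrite [RHS]ffunE.
case: eqP => [->|x_neq]; first by rewrite planted_pos.
by rewrite planted_Some // [RHS]ffunE (introF eqP x_neq).
Qed.

Lemma planted_Some_fupdate (p : P) j x :
  planted (fupdate p j x) (Some j) = planted p (Some j).
Proof.
apply/ffunP => x'; rewrite !ffunE; congr (if _ is Some i then _ else _).
apply: eq_pick => i /=; rewrite ffunE.
by case: (eqVneq i j) => [->|ij]; rewrite ?eqxx ?andbF.
Qed.

Lemma planted_None_inj (p p' : P) : injective p -> injective p' ->
  planted p None = planted p' None -> p = p'.
Proof.
move=> p_inj p'_inj E; apply/ffunP => i.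
have := planted_pos None i p_inj; rewrite E /=.
case: (plantedP None (p i) p'_inj) => [[i' -> ->] /ys_inj -> //|[-> _] z_eq].
by have := ys_neq_z i; rewrite z_eq eqxx.
Qed.

Lemma planted_Some_inj (p : P) : injective p -> injective (fun j => planted p (Some j)).
Proof.
move=> p_inj j j' /= E; have := planted_pos (Some j) j p_inj.
rewrite E planted_pos //= eqxx /=; case: eqP => [[]//|_ /= z_eq].
by have := ys_neq_z j; rewrite z_eq eqxx.
Qed.

Definition hard_pair (f g : T) : bool :=
  [exists p : P, injectiveb p &&
     [exists j, (f == planted p None) && (g == planted p (Some j))]].

Lemma hard_pairP (f g : T) :
  reflect (exists (p : P) j, [/\ injective p, f = planted p None & g = planted p (Some j)])
          (hard_pair f g).
Proof.
apply: (iffP existsP) => [[p /andP [/injectiveP p_inj /existsP [j /andP [/eqP -> /eqP ->]]]]|].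
  by exists p, j.
move=> [p [j [p_inj -> ->]]]; exists p; apply/andP; split; first exact/injectiveP.
by apply/existsP; exists j; rewrite !eqxx.
Qed.

Lemma hard_pair_yes f g : hard_pair f g -> forall i, in_image f (ys i).
Proof. by case/hard_pairP => p [j [p_inj -> _]] i; rewrite in_image_planted. Qed.

Lemma hard_pair_no f g : hard_pair f g -> #|[set i | in_image g (ys i)]| = k.-1.
Proof.
case/hard_pairP => p [j [p_inj _ ->]].
have -> : [set i | in_image (planted p (Some j)) (ys i)] = [set~ j].
  by apply/setP => i; rewrite !inE in_image_planted.
by rewrite cardsC1 card_ord.
Qed.

Lemma card_hard_pair_l (f g0 : T) : hard_pair f g0 -> #|[set g | hard_pair f g]| = k.
Proof.
case/hard_pairP => p [j0 [p_inj f_eq _]].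
have -> : [set g | hard_pair f g] = [set planted p (Some j) | j : 'I_k].
  apply/setP => g; rewrite inE; apply/hard_pairP/imsetP => [[p' [j [p'_inj f_eq' ->]]]|].
    by exists j => //; rewrite (planted_None_inj p'_inj p_inj) // -f_eq' -f_eq.
  by move=> [j _ ->]; exists p, j.
by rewrite card_imset ?card_ord //; apply: planted_Some_inj.
Qed.

Lemma card_hard_pair_r (f0 g : T) : hard_pair f0 g ->
  (2 ^ n - k.-1 <= #|[set f | hard_pair f g]|)%N.
Proof.
case/hard_pairP => p [j [p_inj _ g_eq]].
set E := ~: (p @: [set~ j]).
have E_free x i : x \in E -> i != j -> p i != x.
  rewrite inE => x_free ij; apply: contra x_free => /eqP <-.
  by apply/imsetP; exists i; rewrite ?inE.
have card_E : (2 ^ n - k.-1 <= #|E|)%N.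
  have := leq_imset_card p [set~ j]; rewrite cardsC1 card_ord.
  have := cardsC (p @: [set~ j]); rewrite -/E card_tuple card_bool; lia.
pose f_of x := planted (fupdate p j x) None.
have f_of_inj : {in E &, injective f_of}.
  move=> x x' /E_free x_free /E_free x'_free /planted_None_inj eq_xx'.
  move/ffunP/(_ j): (eq_xx' (fupdate_inj p_inj x_free) (fupdate_inj p_inj x'_free)).
  by rewrite !ffunE eqxx.
apply: leq_trans card_E _; rewrite -(card_in_imset f_of_inj).
apply/subset_leq_card/subsetP => _ /imsetP [x /E_free x_free ->]; rewrite inE.
apply/hard_pairP; exists (fupdate p j x), j; split => //; first exact: fupdate_inj.
by rewrite planted_Some_fupdate.
Qed.

Lemma card_hard_pair_differs_l d w (f : T) (b : basis n m d w) :
  (#|[set g | hard_pair f g && query_differs f g b]| <= minn d k)%N.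
Proof.
rewrite leq_min; apply/andP; split.
  apply: (card_query_differs_fupdate (v := z)) => _ /hard_pairP [p [j [p_inj -> ->]]].
  by exists (p j); rewrite planted_Some.
case: (pickP (hard_pair f)) => [g0 /card_hard_pair_l <-|none].
  by apply/subset_leq_card/subsetP => g; rewrite !inE => /andP [].
by rewrite eq_card0 // => g; rewrite !inE none.
Qed.

Lemma card_hard_pair_differs_r d w (g : T) (b : basis n m d w) :
  (#|[set f | hard_pair f g && query_differs f g b]| <= d)%N.
Proof.
case: (pickP (hard_pair^~ g)) => [f0 /hard_pairP [p [j [p_inj _ g_eq]]]|none]; last first.
  by rewrite eq_card0 // => f; rewrite !inE none.
rewrite (eq_card (B := [set f | hard_pair f g && query_differs g f b])); last first.
  by move=> f; rewrite !inE query_differsC.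
apply: (card_query_differs_fupdate (v := ys j)) => _ /hard_pairP [p' [j' [p'_inj -> g_eq']]].
have j'_eq : j' = j.
  move: (in_image_planted (Some j') j p'_inj).
  by rewrite -g_eq' g_eq in_image_planted // eqxx /= => /esym/negbFE/eqP [->].
by rewrite g_eq' j'_eq; exists (p' j); apply: planted_None.
Qed.

Lemma exists_hard_pair : (0 < k)%N -> (k <= 2 ^ n)%N -> exists f g, hard_pair f g.
Proof.
move=> k_gt0 k_le.
have [p p_inj] : exists p : P, injective p.
  by apply: exists_inj_ffun; rewrite card_tuple card_bool.
exists (planted p None), (planted p (Some (Ordinal k_gt0))).
by apply/hard_pairP; exists p, (Ordinal k_gt0).
Qed.

Lemma hard_pair_adversary d w t (U : nat -> op (basis n m d w))
    (out : pred (basis n m d w)) (lam : R) :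
  (0 < k)%N -> (k <= 2 ^ n)%N -> 0 < lam ->
  (forall i, (i <= t)%N -> unitary (U i)) ->
  (forall f, (forall i, in_image f (ys i)) -> 3 / 4 <= acc_prob f U t out) ->
  (forall f, #|[set i | in_image f (ys i)]| = k.-1 -> acc_prob f U t out <= 1 / 4) ->
  1 / 32 <= t%:R * (lam * ((minn d k)%:R / k%:R) + d%:R / (2 ^ n - k.-1)%:R / lam).
Proof.
move=> k_gt0 k_le lam_gt0 U_unitary accept reject.
pose W f g : R := (hard_pair f g)%:R.
apply: (@adversary_bound n m d w t U U_unitary W) => //.
- move=> f b; rewrite /W; under eq_bigr do rewrite -natrM mulnb.
  case: (pickP (hard_pair f)) => [g0 pair_fg0|none].
    rewrite !sumr_bool_card (card_hard_pair_l pair_fg0) mulfVK ?pnatr_eq0 -?lt0n //.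
    by rewrite ler_nat card_hard_pair_differs_l.
  by rewrite !big1 ?mulr0 // => g _; rewrite none.
- move=> g b; rewrite /W; under eq_bigr do rewrite -natrM mulnb.
  case: (pickP (hard_pair^~ g)) => [f0 pair_f0g|none].
    have M_neq0 : (2 ^ n - k.-1)%:R != 0 :> R by rewrite pnatr_eq0 -lt0n subn_gt0 prednK.
    rewrite !sumr_bool_card; apply: le_trans (_ : d%:R <= _).
      by rewrite ler_nat card_hard_pair_differs_r.
    rewrite -{1}(mulfVK M_neq0 d%:R) ler_wpM2l ?divr_ge0 ?ler0n // ler_nat.
    exact: card_hard_pair_r pair_f0g.
  by rewrite !big1 ?mulr0 // => f _; rewrite none.
- have [f0 [g0 pair_fg0]] := exists_hard_pair k_gt0 k_le.
  rewrite (bigD1 f0) //= (bigD1 g0) //= {1}/W pair_fg0 -addrA.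
  by apply: ltr_pwDl => //; rewrite addr_ge0 ?sumr_ge0 // => f _; rewrite sumr_ge0.
- move=> f g; rewrite /W; have [pair_fg _|] := boolP (hard_pair f g); last by rewrite ltxx.
  apply: (dot_le_of_acc_gap (out := out)); rewrite ?(run_unit_norm _ U_unitary) //.
    exact: accept (hard_pair_yes pair_fg).
  exact: reject (hard_pair_no pair_fg).
Qed.

End Planted.

Lemma sqr_le_of_forall_lambda (F : realFieldType) (eps t a b : F) :
  0 < eps -> 0 < a -> 0 <= t ->
  (forall lam, 0 < lam -> eps <= t * (lam * a + b / lam)) ->
  eps ^+ 2 <= 4 * t ^+ 2 * a * b.
Proof.
move=> eps_gt0 a_gt0 t_ge0 bound.
have t_gt0 : 0 < t.
  rewrite lt_def t_ge0 andbT; apply: contraTneq (bound 1 ltr01) => ->.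
  by rewrite mul0r -ltNge.
have lam_gt0 : 0 < eps / (2 * t * a) by rewrite divr_gt0 ?mulr_gt0.
have := bound _ lam_gt0.
have -> : t * (eps / (2 * t * a) * a + b / (eps / (2 * t * a)))
    = eps / 2 + 2 * (t ^+ 2 * a * b) / eps.
  by field; rewrite !gt_eqF.
rewrite -(ler_pM2r eps_gt0) mulrDl mulfVK ?gt_eqF //; lra.
Qed.

Lemma mulr_sqrt_le (F : rcfType) (c x t : F) : 0 <= c -> 0 <= t ->
  c ^+ 2 * x <= t ^+ 2 -> c * Num.sqrt x <= t.
Proof.
move=> c_ge0 t_ge0 le_sq; have [x_lt0|x_ge0] := ltP x 0.
  by rewrite ltr0_sqrtr // mulr0.
rewrite -[c](ger0_norm c_ge0) -sqrtr_sqr -sqrtrM ?sqr_ge0 //.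
by rewrite -[t](ger0_norm t_ge0) -sqrtr_sqr ler_sqrt ?sqr_ge0.
Qed.

Lemma exists_items (T : finType) k : (k < #|T|)%N ->
  exists (ys : {ffun 'I_k -> T}) (z : T), injective ys /\ forall i, ys i != z.
Proof.
move=> /exists_inj_ffun [p p_inj].
exists [ffun i => p (widen_ord (leqnSn k) i)], (p ord_max); split.
  by move=> i j; rewrite !ffunE => /p_inj /(congr1 val) /= /val_inj.
by move=> i; rewrite ffunE (inj_eq p_inj) -(inj_eq val_inj) /= neq_ltn ltn_ord.
Qed.

Lemma adversary_rate (F : realFieldType) (N M k d mn t : F) :
  0 < k -> 0 < M -> 0 < d -> 0 < mn -> N <= 2 * M ->
  (1 / 32) ^+ 2 <= 4 * t ^+ 2 * (mn / k) * (d / M) ->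
  (1 / 128) ^+ 2 * (N * k / (d * mn)) <= t ^+ 2.
Proof.
move=> k_gt0 M_gt0 d_gt0 mn_gt0 N_le.
have y_gt0 : 0 < k / (d * mn) by rewrite divr_gt0 ?mulr_gt0.
have -> : 4 * t ^+ 2 * (mn / k) * (d / M) = 4 * t ^+ 2 / (M * (k / (d * mn))).
  by field; rewrite !gt_eqF.
rewrite ler_pdivlMr; last exact: mulr_gt0.
rewrite -[N * k / _]mulrA; set y := k / (d * mn).
have : N * y <= 2 * (M * y) by rewrite mulrA ler_pM2r.
have := sqr_ge0 t; move: (N * y) (M * y) (t ^+ 2) => Ny My s; lra.
Qed.

Theorem theorem1 :
  exists c : R, 0 < c /\
  exists N0 : nat,
  forall n m d k : nat,
    (0 < n)%N -> (0 < m)%N -> (0 < d)%N -> (0 < k)%N ->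
    (k <= 2 ^ (m - 1))%N ->
    (N0 <= 2 ^ n)%N -> (d * d <= 2 ^ n)%N -> (k * k <= 2 ^ n)%N ->
  forall (w t : nat)
         (U : {ffun 'I_k -> bits m} -> nat -> op (basis n m d w))
         (out : {ffun 'I_k -> bits m} -> pred (basis n m d w)),
    (forall ys : {ffun 'I_k -> bits m}, injective ys ->
       forall i : nat, (i <= t)%N -> unitary (U ys i)) ->
    (forall (ys : {ffun 'I_k -> bits m}) (f : bits n -> bits m), injective ys ->
       (forall i : 'I_k, in_image f (ys i)) ->
       3 / 4 <= acc_prob f (U ys) t (out ys)) ->
    (forall (ys : {ffun 'I_k -> bits m}) (f : bits n -> bits m), injective ys ->
       #|[set i : 'I_k | in_image f (ys i)]| = k.-1 ->
       acc_prob f (U ys) t (out ys) <= 1 / 4) ->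
    c * Num.sqrt ((2 ^ n * k)%:R / (d * minn d k)%:R) <= t%:R.
Proof.
exists (1 / 128); split; first by lra.
exists 0%N => n m d k _ m_gt0 d_gt0 k_gt0 k_le_half _ _ kk_le.
move=> w t U out U_unitary accept reject.
have k_lt : (k < #|{: bits m}|)%N.
  by rewrite card_tuple card_bool -(subnK m_gt0) addn1 expnS; lia.
have [ys [z [ys_inj ys_neq_z]]] := exists_items k_lt.
have k_le : (k <= 2 ^ n)%N by nia.
have N_le : (2 ^ n <= 2 * (2 ^ n - k.-1))%N by nia.
have bound : (1 / 32 : R) ^+ 2
    <= 4 * t%:R ^+ 2 * ((minn d k)%:R / k%:R) * (d%:R / (2 ^ n - k.-1)%:R).
  apply: sqr_le_of_forall_lambda => [||| lam lam_gt0].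
  - by lra.
  - by rewrite divr_gt0 ?ltr0n ?leq_min ?d_gt0.
  - exact: ler0n.
  apply: (hard_pair_adversary ys_inj ys_neq_z k_gt0 k_le lam_gt0 (U_unitary ys ys_inj)).
    by move=> f; apply: accept.
  by move=> f; apply: reject.
apply: mulr_sqrt_le; rewrite ?ler0n //; first by lra.
rewrite !natrM; apply: adversary_rate bound; rewrite ?ltr0n ?leq_min ?d_gt0 //; first lia.
by rewrite -natrM ler_nat.
Qed.
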